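(* Let $G_1$ and $G_2$ be TRVGs with $V(G_1)\cap V(G_2)=\{v\}$. Suppose that for each $i\in\{1,2\}$ there is a rectangle representation of $G_i$ in which the rectangle for $v$ sees no other rectangle in one of the two directions (i.e., either no horizontal line or no vertical line meets the interiors of both the rectangle for $v$ and another rectangle of the representation). Then $G_1\cup G_2=(V(G_1)\cup V(G_2),E(G_1)\cup E(G_2))$ is a TRVG.
   Context: A graph $G$ is a transparent rectangle visibility graph (TRVG) if its vertices can be represented by a collection of pairwise non-overlapping rectangles in the plane whose sides are parallel to the coordinate axes, one per vertex, such that two distinct vertices are adjacent if and only if there is a horizontal or a vertical line intersecting the interiors of both of their rectangles (other rectangles do not block visibility). Two rectangles see each other horizontally (resp. vertically) if some horizontal (resp. vertical) line meets the interiors of both. *)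

From HB Require Import structures.
From mathcomp Require Import all_boot all_order all_algebra.
From mathcomp Require Import Rstruct.
Set Implicit Arguments. Unset Strict Implicit. Unset Printing Implicit Defensive.
Import Order.TTheory GRing.Theory Num.Theory.
Local Open Scope ring_scope.

(* An axis-parallel rectangle [x1,x2] x [y1,y2] in the plane, stored as
   ((x1, x2), (y1, y2)). *)
Notation R := Rdefinitions.R.
Definition rect := ((R * R) * (R * R))%type.

Definition rx1 (r : rect) : R := r.1.1.
Definition rx2 (r : rect) : R := r.1.2.
Definition ry1 (r : rect) : R := r.2.1.
Definition ry2 (r : rect) : R := r.2.2.

Definition rect_ok (r : rect) : Prop := rx1 r < rx2 r /\ ry1 r < ry2 r.

Definition in_interior (r : rect) (p q : R) : Prop :=
  rx1 r < p < rx2 r /\ ry1 r < q < ry2 r.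

Definition non_overlapping (r s : rect) : Prop :=
  forall p q : R, ~ (in_interior r p q /\ in_interior s p q).

Definition sees_h (r s : rect) : Prop :=
  exists c : R, ry1 r < c < ry2 r /\ ry1 s < c < ry2 s.

Definition sees_v (r s : rect) : Prop :=
  exists c : R, rx1 r < c < rx2 r /\ rx1 s < c < rx2 s.

Definition sees (r s : rect) : Prop := sees_h r s \/ sees_v r s.

Definition simple_graph (T : finType) (A : {set T}) (E : rel T) : Prop :=
  (forall x y, E x y = E y x) /\
  (forall x, ~~ E x x) /\
  (forall x y, E x y -> (x \in A) && (y \in A)).

Definition trv_rep (T : finType) (A : {set T}) (E : rel T) (f : T -> rect)
  : Prop :=
  (forall x, x \in A -> rect_ok (f x)) /\
  (forall x y, x \in A -> y \in A -> x != y -> non_overlapping (f x) (f y)) /\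
  (forall x y, x \in A -> y \in A -> x != y -> (E x y <-> sees (f x) (f y))).

Definition is_TRVG (T : finType) (A : {set T}) (E : rel T) : Prop :=
  exists f : T -> rect, trv_rep A E f.

Definition blind_in_some_direction (T : finType) (A : {set T})
  (f : T -> rect) (v : T) : Prop :=
  (forall w, w \in A -> w != v -> ~ sees_h (f v) (f w)) \/
  (forall w, w \in A -> w != v -> ~ sees_v (f v) (f w)).

(* Transposing a representation swaps the two directions, so we may assume
   that the rectangle of v sees nothing horizontally in the representation
   f1 of G1 and nothing vertically in the representation f2 of G2.  Every
   other rectangle of G1 then lies entirely above or entirely below f1 v,
   and every other rectangle of G2 entirely to the left or to the right of
   f2 v.  With all coordinates in [-S, S], we give v the x-interval of f1 v
   and the y-interval of f2 v, push the other rectangles of G1 vertically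
   by +-2S away from v and those of G2 horizontally by +-2S.  This preserves
   all horizontal and vertical overlaps inside each G_i, while a rectangle of
   G1 - v and one of G2 - v now overlap in neither direction. *)
From mathcomp Require Import all_boot all_order all_algebra.
From mathcomp Require Import Rstruct lra.
Set Implicit Arguments. Unset Strict Implicit. Unset Printing Implicit Defensive.
Import Order.TTheory GRing.Theory Num.Theory.
Local Open Scope ring_scope.

Definition overlap (I J : R * R) : Prop :=
  exists c, I.1 < c < I.2 /\ J.1 < c < J.2.

Definition shift (I : R * R) (t : R) : R * R := (I.1 + t, I.2 + t).

Definition inside (S : R) (I : R * R) : Prop := -S <= I.1 /\ I.2 <= S.

Definition outside (S : R) (I : R * R) : Prop := I.2 <= -S \/ S <= I.1.

Lemma overlap_sym I J : overlap I J <-> overlap J I.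
Proof. by split=> -[c [? ?]]; exists c. Qed.

Lemma overlapE I J : I.1 < I.2 -> J.1 < J.2 ->
  overlap I J <-> I.1 < J.2 /\ J.1 < I.2.
Proof.
move=> ltI ltJ; split=> [[c [/andP[? ?] /andP[? ?]]]|[? ?]]; first by split; lra.
have [le1|lt1] := leP I.1 J.1; have [le2|lt2] := leP I.2 J.2.
- by exists ((J.1 + I.2) / 2); split; apply/andP; split; lra.
- by exists ((J.1 + J.2) / 2); split; apply/andP; split; lra.
- by exists ((I.1 + I.2) / 2); split; apply/andP; split; lra.
- by exists ((I.1 + J.2) / 2); split; apply/andP; split; lra.
Qed.

Lemma apart_not_overlap I J : I.2 <= J.1 \/ J.2 <= I.1 -> ~ overlap I J.
Proof. by move=> sep [c [/andP[? ?] /andP[? ?]]]; case: sep; lra. Qed.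

Lemma overlap_shift I J t : overlap (shift I t) (shift J t) <-> overlap I J.
Proof.
split=> -[c [/= /andP[? ?] /andP[? ?]]]; [exists (c - t) | exists (c + t)];
  by split; apply/andP; split; rewrite /=; lra.
Qed.

Lemma inside_outside_disjoint S I J : inside S I -> outside S J -> ~ overlap I J.
Proof. by move=> [? ?] sep; apply: apart_not_overlap; case: sep; lra. Qed.

Lemma inside_le S S' I : S <= S' -> inside S I -> inside S' I.
Proof. by move=> ? [? ?]; split; lra. Qed.

Lemma inside_norm S I : `|I.1| + `|I.2| <= S -> inside S I.
Proof.
move=> bound; have ? := normr_ge0 I.1; have ? := normr_ge0 I.2.
have /andP[? ?] : -S <= I.1 <= S by rewrite -ler_norml; lra.
have /andP[? ?] : -S <= I.2 <= S by rewrite -ler_norml; lra.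
by split.
Qed.

Lemma rect_bound (T : finType) (f : T -> rect) :
  exists S, forall w, inside S (f w).1 /\ inside S (f w).2.
Proof.
pose mass (r : rect) := `|r.1.1| + `|r.1.2| + (`|r.2.1| + `|r.2.2|).
exists (\sum_w mass (f w)) => w.
have : mass (f w) <= \sum_w mass (f w).
  rewrite (bigD1 w) //= lerDl sumr_ge0 // => u _.
  by rewrite !addr_ge0.
rewrite /mass => bound.
have ? := normr_ge0 (f w).1.1; have ? := normr_ge0 (f w).1.2.
have ? := normr_ge0 (f w).2.1; have ? := normr_ge0 (f w).2.2.
by split; apply: inside_norm; lra.
Qed.

Lemma seesE r s : sees r s <-> overlap r.2 s.2 \/ overlap r.1 s.1.
Proof. by []. Qed.

Lemma non_overlappingE r s :
  non_overlapping r s <-> ~ (overlap r.1 s.1 /\ overlap r.2 s.2).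
Proof.
split=> [disj [[p [? ?]] [q [? ?]]] | sep p q [[? ?] [? ?]]].
  by apply: (disj p q); split; split.
by apply: sep; split; [exists p | exists q]; split.
Qed.

Lemma trv_rep_congr (T : finType) (A : {set T}) (E : rel T) (f : T -> rect)
    (x y : T) (r s : rect) :
  trv_rep A E f -> x \in A -> y \in A -> x != y ->
  (overlap r.1 s.1 <-> overlap (f x).1 (f y).1) ->
  (overlap r.2 s.2 <-> overlap (f x).2 (f y).2) ->
  non_overlapping r s /\ (E x y <-> sees r s).
Proof.
move=> [_ [disj edge]] xA yA xy eq1 eq2.
rewrite non_overlappingE seesE eq1 eq2 -seesE -non_overlappingE.
by split; [apply: disj | apply: edge].
Qed.

Lemma separated_rects r s :
  ~ overlap r.1 s.1 -> ~ overlap r.2 s.2 -> non_overlapping r s /\ ~ sees r s.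
Proof. by move=> ? ?; rewrite non_overlappingE seesE; split; tauto. Qed.

Definition transpose (r : rect) : rect := (r.2, r.1).

Lemma trv_rep_transpose (T : finType) (A : {set T}) (E : rel T) (f : T -> rect) :
  trv_rep A E f -> trv_rep A E (transpose \o f).
Proof.
move=> [ok [disj edge]].
split; [|split] => [x /ok [? ?] | x y xA yA xy | x y xA yA xy].
- by split.
- by have := disj x y xA yA xy; rewrite !non_overlappingE /=; tauto.
- by rewrite edge // !seesE /=; tauto.
Qed.

Section Push.

Variables (T : finType) (A : {set T}) (I : T -> R * R) (v : T) (S : R).
Variable Jv : R * R.
Hypothesis vA : v \in A.
Hypothesis I_ok : forall w, w \in A -> (I w).1 < (I w).2.
Hypothesis I_inside : forall w, w \in A -> inside S (I w).
Hypothesis v_isolated : forall w, w \in A -> w != v -> ~ overlap (I v) (I w).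
Hypothesis Jv_ok : Jv.1 < Jv.2.
Hypothesis Jv_inside : inside S Jv.

Definition push (w : T) : R * R :=
  if w == v then Jv
  else shift (I w) (if (I w).2 <= (I v).1 then - (2 * S) else 2 * S).

Lemma push_v : push v = Jv.
Proof. by rewrite /push eqxx. Qed.

Lemma isolated_side w : w \in A -> w != v ->
  (I w).2 <= (I v).1 \/ (I v).2 <= (I w).1.
Proof.
move=> wA wv; have := v_isolated wA wv; rewrite overlapE ?I_ok //.
have [|_] := leP (I w).2 (I v).1; first by left.
have [|_] := leP (I v).2 (I w).1; first by right.
by case.
Qed.

Lemma push_ok w : w \in A -> (push w).1 < (push w).2.
Proof.
rewrite /push; case: eqP => // _ /I_ok ?.
by case: ifP => _ /=; lra.
Qed.

Lemma push_outside w : w \in A -> w != v -> outside S (push w).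
Proof.
move=> wA wv; rewrite /push (negbTE wv); have [? ?] := I_inside wA.
by case: ifP => _; [left | right]; rewrite /=; lra.
Qed.

Lemma overlap_push x y : x \in A -> y \in A -> x != y ->
  overlap (push x) (push y) <-> overlap (I x) (I y).
Proof.
wlog xv : x y / x != v.
  move=> sym xA yA xy; have [exv|xv] := eqVneq x v; last exact: sym.
  have yv : y != v by rewrite -exv eq_sym.
  rewrite overlap_sym [overlap (I x) _]overlap_sym.
  by apply: sym; rewrite // eq_sym.
move=> xA yA xy; have [-> | yv] := eqVneq y v.
  rewrite push_v; split=> /overlap_sym overl; exfalso.
    exact: inside_outside_disjoint Jv_inside (push_outside xA xv) overl.
  exact: v_isolated xA xv overl.
have ? := isolated_side xA xv; have ? := isolated_side yA yv.
have [? ?] := I_inside xA; have [? ?] := I_inside yA; have ? := I_ok vA.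
rewrite /push (negbTE xv) (negbTE yv).
case: (leP (I x).2 (I v).1) => ?; case: (leP (I y).2 (I v).1) => ?;
  try exact: overlap_shift.
all: by split=> overl; exfalso; apply: (apart_not_overlap _ overl); rewrite /=; lra.
Qed.

End Push.

Section Glue.

Variables (T : finType) (A1 A2 : {set T}) (E1 E2 : rel T) (v : T).
Variables (f1 f2 : T -> rect) (S : R).
Hypothesis E1_sub : forall x y, E1 x y -> (x \in A1) && (y \in A1).
Hypothesis E2_sub : forall x y, E2 x y -> (x \in A2) && (y \in A2).
Hypothesis A12 : A1 :&: A2 = [set v].
Hypothesis rep1 : trv_rep A1 E1 f1.
Hypothesis rep2 : trv_rep A2 E2 f2.
Hypothesis blind1 : forall w, w \in A1 -> w != v -> ~ sees_h (f1 v) (f1 w).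
Hypothesis blind2 : forall w, w \in A2 -> w != v -> ~ sees_v (f2 v) (f2 w).
Hypothesis f1_inside : forall w, inside S (f1 w).1 /\ inside S (f1 w).2.
Hypothesis f2_inside : forall w, inside S (f2 w).1 /\ inside S (f2 w).2.

Local Notation I1 := (fun w => (f1 w).2).
Local Notation I2 := (fun w => (f2 w).1).
Local Notation push1 := (push I1 v S (f2 v).2).
Local Notation push2 := (push I2 v S (f1 v).1).

Definition glue (x : T) : rect :=
  if x \in A1 then ((f1 x).1, push1 x) else (push2 x, (f2 x).2).

Lemma v_in_A1 : v \in A1.
Proof. by have := set11 v; rewrite -A12 inE => /andP[]. Qed.

Lemma v_in_A2 : v \in A2.
Proof. by have := set11 v; rewrite -A12 inE => /andP[]. Qed.

Lemma in_A1_A2 x : x \in A1 -> x \in A2 -> x = v.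
Proof. by move=> x1 x2; apply/set1P; rewrite -A12 inE x1 x2. Qed.

Lemma glue_A1 x : x \in A1 -> glue x = ((f1 x).1, push1 x).
Proof. by rewrite /glue => ->. Qed.

Lemma glue_A2 x : x \in A2 -> glue x = (push2 x, (f2 x).2).
Proof.
rewrite /glue => x2; case: ifP => // x1.
by rewrite (in_A1_A2 x1 x2) !push_v.
Qed.

Lemma f1_ok x : x \in A1 -> rect_ok (f1 x). Proof. by case: rep1 => ok _ /ok. Qed.
Lemma f2_ok x : x \in A2 -> rect_ok (f2 x). Proof. by case: rep2 => ok _ /ok. Qed.

Lemma push1_ok x : x \in A1 -> (push1 x).1 < (push1 x).2.
Proof.
exact: (push_ok (I := I1) v S (fun w wA => proj2 (f1_ok wA))
  (proj2 (f2_ok v_in_A2))).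
Qed.

Lemma push2_ok x : x \in A2 -> (push2 x).1 < (push2 x).2.
Proof.
exact: (push_ok (I := I2) v S (fun w wA => proj1 (f2_ok wA))
  (proj1 (f1_ok v_in_A1))).
Qed.

Lemma push1_outside x : x \in A1 -> x != v -> outside S (push1 x).
Proof. exact: (push_outside (I := I1) _ (fun w _ => proj2 (f1_inside w))). Qed.

Lemma push2_outside x : x \in A2 -> x != v -> outside S (push2 x).
Proof. exact: (push_outside (I := I2) _ (fun w _ => proj1 (f2_inside w))). Qed.

Lemma overlap_push1 x y : x \in A1 -> y \in A1 -> x != y ->
  overlap (push1 x) (push1 y) <-> overlap (f1 x).2 (f1 y).2.
Proof.
exact: (overlap_push (I := I1) v_in_A1 (fun w wA => proj2 (f1_ok wA))
  (fun w _ => proj2 (f1_inside w)) blind1 (proj2 (f2_inside v))).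
Qed.

Lemma overlap_push2 x y : x \in A2 -> y \in A2 -> x != y ->
  overlap (push2 x) (push2 y) <-> overlap (f2 x).1 (f2 y).1.
Proof.
exact: (overlap_push (I := I2) v_in_A2 (fun w wA => proj1 (f2_ok wA))
  (fun w _ => proj1 (f2_inside w)) blind2 (proj1 (f1_inside v))).
Qed.

Lemma glue_ok x : x \in A1 :|: A2 -> rect_ok (glue x).
Proof.
case/setUP=> xA; [rewrite glue_A1 // | rewrite glue_A2 //].
  by split; [case: (f1_ok xA) | apply: push1_ok].
by split; [apply: push2_ok | case: (f2_ok xA)].
Qed.

Lemma glue_rep_A1 x y : x \in A1 -> y \in A1 -> x != y ->
  non_overlapping (glue x) (glue y) /\ (E1 x y || E2 x y <-> sees (glue x) (glue y)).
Proof.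
move=> xA yA xy; have -> : E2 x y = false.
  apply/negbTE/negP => /E2_sub/andP[x2 y2]; move/eqP: xy; apply.
  by rewrite (in_A1_A2 xA x2) (in_A1_A2 yA y2).
rewrite orbF; apply: (trv_rep_congr rep1) => //; rewrite !glue_A1 //.
exact: overlap_push1.
Qed.

Lemma glue_rep_A2 x y : x \in A2 -> y \in A2 -> x != y ->
  non_overlapping (glue x) (glue y) /\ (E1 x y || E2 x y <-> sees (glue x) (glue y)).
Proof.
move=> xA yA xy; have -> : E1 x y = false.
  apply/negbTE/negP => /E1_sub/andP[x1 y1]; move/eqP: xy; apply.
  by rewrite (in_A1_A2 x1 xA) (in_A1_A2 y1 yA).
apply: (trv_rep_congr rep2) => //; rewrite !glue_A2 //.
exact: overlap_push2.
Qed.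

Lemma glue_cross x y : x \in A1 -> y \in A2 -> x != v -> y != v ->
  ~ overlap (glue x).1 (glue y).1 /\ ~ overlap (glue x).2 (glue y).2.
Proof.
move=> xA yA xv yv; rewrite glue_A1 // glue_A2 //; split.
  exact: inside_outside_disjoint (proj1 (f1_inside x)) (push2_outside yA yv).
rewrite overlap_sym.
exact: inside_outside_disjoint (proj2 (f2_inside y)) (push1_outside xA xv).
Qed.

Lemma glue_trv_rep : trv_rep (A1 :|: A2) (fun x y => E1 x y || E2 x y) glue.
Proof.
suff pair x y : x \in A1 :|: A2 -> y \in A1 :|: A2 -> x != y ->
    non_overlapping (glue x) (glue y) /\ (E1 x y || E2 x y <-> sees (glue x) (glue y)).
  by split; [exact: glue_ok | split=> x y xA yA xy; case: (pair x y xA yA xy)].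
move=> xA yA xy.
have [/andP[x1 y1] | not1] := boolP ((x \in A1) && (y \in A1)).
  exact: glue_rep_A1.
have [/andP[x2 y2] | not2] := boolP ((x \in A2) && (y \in A2)).
  exact: glue_rep_A2.
have -> : E1 x y || E2 x y = false.
  by apply/negbTE/negP => /orP[/E1_sub | /E2_sub]; apply/negP.
suff [sep1 sep2] : ~ overlap (glue x).1 (glue y).1 /\ ~ overlap (glue x).2 (glue y).2.
  by have [disj not_sees] := separated_rects sep1 sep2; split.
have cross u w : u \in A1 -> w \in A2 -> ~~ ((u \in A2) && (w \in A2)) ->
    ~~ ((u \in A1) && (w \in A1)) ->
    ~ overlap (glue u).1 (glue w).1 /\ ~ overlap (glue u).2 (glue w).2.
  move=> u1 w2 not2' not1'; apply: glue_cross => //.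
    by apply: contraNneq not2' => ->; rewrite v_in_A2 w2.
  by apply: contraNneq not1' => ->; rewrite v_in_A1 u1.
case/setUP: xA => xA; case/setUP: yA => yA.
- by rewrite xA yA in not1.
- exact: cross.
- rewrite overlap_sym [overlap (glue x).2 _]overlap_sym.
  by apply: cross; rewrite // andbC.
- by rewrite xA yA in not2.
Qed.

End Glue.

Lemma trvg_union_blind_hv (T : finType) (A1 A2 : {set T}) (E1 E2 : rel T)
    (v : T) (f1 f2 : T -> rect) :
  simple_graph A1 E1 -> simple_graph A2 E2 -> A1 :&: A2 = [set v] ->
  trv_rep A1 E1 f1 -> (forall w, w \in A1 -> w != v -> ~ sees_h (f1 v) (f1 w)) ->
  trv_rep A2 E2 f2 -> (forall w, w \in A2 -> w != v -> ~ sees_v (f2 v) (f2 w)) ->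
  is_TRVG (A1 :|: A2) (fun x y => E1 x y || E2 x y).
Proof.
move=> [_ [_ E1_sub]] [_ [_ E2_sub]] A12 rep1 blind1 rep2 blind2.
have [S1 f1_inside] := rect_bound f1; have [S2 f2_inside] := rect_bound f2.
have S1_le : S1 <= Num.max S1 S2 by rewrite le_max lexx.
have S2_le : S2 <= Num.max S1 S2 by rewrite le_max lexx orbT.
exists (glue A1 v f1 f2 (Num.max S1 S2)).
apply: (glue_trv_rep E1_sub E2_sub A12 rep1 rep2 blind1 blind2) => w.
  by have [? ?] := f1_inside w; split; apply: inside_le S1_le _.
by have [? ?] := f2_inside w; split; apply: inside_le S2_le _.
Qed.

Theorem lemma1 (T : finType) (A1 A2 : {set T}) (E1 E2 : rel T) (v : T) :
  simple_graph A1 E1 -> simple_graph A2 E2 ->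
  A1 :&: A2 = [set v] ->
  (exists f1 : T -> rect, trv_rep A1 E1 f1 /\ blind_in_some_direction A1 f1 v) ->
  (exists f2 : T -> rect, trv_rep A2 E2 f2 /\ blind_in_some_direction A2 f2 v) ->
  is_TRVG (A1 :|: A2) (fun x y => E1 x y || E2 x y).
Proof.
move=> g1 g2 A12 [f1 [rep1 [b1|b1]]] [f2 [rep2 [b2|b2]]].
- exact: trvg_union_blind_hv g1 g2 A12 rep1 b1 (trv_rep_transpose rep2) b2.
- exact: trvg_union_blind_hv g1 g2 A12 rep1 b1 rep2 b2.
- exact: trvg_union_blind_hv g1 g2 A12
    (trv_rep_transpose rep1) b1 (trv_rep_transpose rep2) b2.
- exact: trvg_union_blind_hv g1 g2 A12 (trv_rep_transpose rep1) b1 rep2 b2.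
Qed.
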